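(* Under the assumptions of the explicit-formulae proposition (piecewise linear concave non-positive increasing $v$ on grid $x_1<\dots<x_N$, $-\infty$ below $x_1$ and constant above $x_N$; $u$ concave increasing with $u^\dagger$ continuous on $(0,\infty)$ and $\lim_{p\to0}u^\dagger(p)=\infty$; $s\in(0,1)$), $\lim_{\eta\to0}X^\eta=\infty$.
   Context: $\Phi$ is the standard normal distribution function, $M=|\mu-r|\sqrt{\delta t}/\sigma$, $Q(x)=\Phi(M+\Phi^{-1}(x))$, $q^A_{BS}=Q'$. For concave increasing $g$, $g^\dagger(p)=\inf\{x:p\in\partial g(x)\}$, $\partial g$ the superdifferential. $C\in\{0,1\}$. For $\eta>0$: $f^\eta(x)=v^\dagger(\eta s^{C-1}e^{-r\delta t}q^A_{BS}(x))$, $\gamma^\eta=u^\dagger\big(-\frac{\eta}{\delta t}\big(-1+s\int_0^1(1+v(f^\eta(x)))\mathrm dx\big)^{-1}\big)$, $X^\eta=\gamma^\eta+s^C\int_0^1e^{-r\delta t}q^A_{BS}(x)f^\eta(x)\mathrm dx$. *)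

From Stdlib Require Import Reals Lra ClassicalEpsilon.
Open Scope R_scope.

(* Hilbert choice of a real satisfying P (arbitrary if none exists). *)
Definition choose_R (P : R -> Prop) : R := epsilon (inhabits 0) P.

Definition phi_density (t : R) : R := / sqrt (2 * PI) * exp (- (t ^ 2) / 2).

Definition int_minf_to (f : R -> R) (x l : R) : Prop :=
  forall eps, 0 < eps -> exists A, forall a, a < A ->
    exists pr : Riemann_integrable f a x, Rabs (RiemannInt pr - l) < eps.

Definition Phi (x : R) : R := choose_R (int_minf_to phi_density x).
Definition Phi_inv (p : R) : R := choose_R (fun y => Phi y = p).

Definition deriv_val (f : R -> R) (x : R) : R := choose_R (derivable_pt_lim f x).

Definition improper_int (f : R -> R) (a b l : R) : Prop :=
  forall eps, 0 < eps -> exists d, 0 < d /\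
    forall a' b', a < a' < a + d -> b - d < b' < b ->
      exists pr : Riemann_integrable f a' b', Rabs (RiemannInt pr - l) < eps.

Definition Int (f : R -> R) (a b : R) : R := choose_R (improper_int f a b).

Definition Mpar (mu r sigma dt : R) : R := Rabs (mu - r) * sqrt dt / sigma.
Definition Qfun (mu r sigma dt : R) (x : R) : R := Phi (Mpar mu r sigma dt + Phi_inv x).
Definition qBS (mu r sigma dt : R) (x : R) : R := deriv_val (Qfun mu r sigma dt) x.

(* superdifferential of a concave g with effective domain D (g = -oo off D) *)
Definition superdiff (D : R -> Prop) (g : R -> R) (x p : R) : Prop :=
  D x /\ forall y, D y -> g y <= g x + p * (y - x).

Definition is_inf (E : R -> Prop) (m : R) : Prop :=
  (forall x, E x -> m <= x) /\ (forall b, (forall x, E x -> b <= x) -> b <= m).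
Definition Rinf (E : R -> Prop) : R := choose_R (is_inf E).

Definition dagger (D : R -> Prop) (g : R -> R) (p : R) : R :=
  Rinf (fun x => superdiff D g x p).

Definition fullR : R -> Prop := fun _ => True.

(* f^eta, gamma^eta, X^eta ; v has effective domain [x_1, oo) where x_1 = xs 0 *)
Definition f_eta (mu r sigma dt s : R) (C : nat) (x1 : R) (v : R -> R)
    (eta x : R) : R :=
  dagger (fun y => x1 <= y) v
    (eta * powerRZ s (Z.of_nat C - 1) * exp (- r * dt) * qBS mu r sigma dt x).

Definition gamma_eta (mu r sigma dt s : R) (C : nat) (x1 : R) (v u : R -> R)
    (eta : R) : R :=
  dagger fullR u
    (- (eta / dt) *
       / (-1 + s * Int (fun x => 1 + v (f_eta mu r sigma dt s C x1 v eta x)) 0 1)).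

Definition X_eta (mu r sigma dt s : R) (C : nat) (x1 : R) (v u : R -> R)
    (eta : R) : R :=
  gamma_eta mu r sigma dt s C x1 v u eta
  + s ^ C * Int (fun x => exp (- r * dt) * qBS mu r sigma dt x
                           * f_eta mu r sigma dt s C x1 v eta x) 0 1.

(* Since [v <= 0], the integral of [1 + v o f^eta] is at most 1, so the argument of
   [u^dagger] in [gamma^eta] lies in (0, eta / (dt (1 - s))): it tends to 0 and [gamma^eta]
   tends to infinity.  The second term of [X^eta] stays bounded below because
   [f^eta >= x_1] and [q^A_BS] has mass at most 1 on (0, 1).

   The substance is that these improper integrals exist.  Via the Gaussian integral, [Phi]
   is an explicit strictly increasing bijection onto (0, 1) and
   [q^A_BS x = exp (- M Phi^-1 x - M^2 / 2)], positive, continuous and nonincreasing.  As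
   [v] is piecewise linear, [v^dagger] is nonincreasing with values on the grid, so [f^eta]
   is a nondecreasing step function, and each integrand is a finite combination of [1] or
   [q^A_BS] cut off at thresholds, which have primitives with limits at both ends. *)

From Coquelicot Require Import Coquelicot.
From Stdlib Require Import Reals Lra Lia Classical ClassicalEpsilon FunctionalExtensionality.
From Stdlib Require Import Ranalysis5.
Open Scope R_scope.

Lemma choose_R_spec (P : R -> Prop) : (exists x, P x) -> P (choose_R P).
Proof. intros H; unfold choose_R; apply epsilon_spec, H. Qed.

Lemma eq_of_dist_lt (l l' : R) : (forall eps, 0 < eps -> Rabs (l - l') < eps) -> l = l'.
Proof.
  intros H; destruct (Req_dec l l') as [E | E]; auto.
  assert (0 < Rabs (l - l')) by (apply Rabs_pos_lt; lra).
  specialize (H (Rabs (l - l')) H0); lra.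
Qed.

Lemma exp_le_compat (a b : R) : a <= b -> exp a <= exp b.
Proof. intros [H | ->]; [left; apply exp_increasing; auto | right; reflexivity]. Qed.

Lemma is_inf_exists (E : R -> Prop) (lb : R) :
  (forall x, E x -> lb <= x) -> (exists x, E x) -> exists m, is_inf E m.
Proof.
  intros Hlb [x0 Hx0].
  destruct (completeness (fun y => E (- y))) as [l [Hub Hlub]].
  - exists (- lb); intros y Hy; specialize (Hlb _ Hy); lra.
  - exists (- x0); rewrite Ropp_involutive; auto.
  - exists (- l); split.
    + intros x Hx; assert (- x <= l) by (apply Hub; rewrite Ropp_involutive; auto); lra.
    + intros b Hb; assert (l <= - b) by (apply Hlub; intros y Hy; specialize (Hb _ Hy); lra); lra.
Qed.

Lemma is_inf_approx (E : R -> Prop) (m eps : R) :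
  is_inf E m -> 0 < eps -> exists x, E x /\ x < m + eps.
Proof.
  intros [_ Hglb] He; apply NNPP; intros Hn.
  assert (m + eps <= m); [| lra].
  apply Hglb; intros x Hx; apply Rnot_lt_le; intros Hlt; apply Hn; eauto.
Qed.

Lemma is_inf_unique (E : R -> Prop) (m m' : R) : is_inf E m -> is_inf E m' -> m = m'.
Proof. intros [A B] [C D]; apply Rle_antisym; [apply D, A | apply B, C]. Qed.

Lemma Rinf_eq (E : R -> Prop) (m : R) : is_inf E m -> Rinf E = m.
Proof. intros H; apply (is_inf_unique E); [unfold Rinf; apply choose_R_spec; eauto | exact H]. Qed.

Lemma exists_argmax_nat (F : nat -> R) (n : nat) :
  (1 <= n)%nat -> exists k, (k < n)%nat /\ forall j, (j < n)%nat -> F j <= F k.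
Proof.
  induction n as [| n IH]; intros Hn; [lia |].
  destruct (Nat.eq_dec n 0) as [-> | Hn0].
  - exists 0%nat; split; [lia |]; intros j Hj; replace j with 0%nat by lia; lra.
  - destruct (IH ltac:(lia)) as [k [Hk Hmax]].
    destruct (Rle_or_lt (F n) (F k)).
    + exists k; split; [lia |]; intros j Hj.
      destruct (Nat.eq_dec j n) as [-> | ?]; [auto | apply Hmax; lia].
    + exists n; split; [lia |]; intros j Hj.
      destruct (Nat.eq_dec j n) as [-> | ?]; [lra | pose proof (Hmax j ltac:(lia)); lra].
Qed.

Lemma filterlim_at_right_iff (a L : R) (K : R -> R) :
  filterlim K (at_right a) (locally L) <->
  forall eps, 0 < eps -> exists d, 0 < d /\ forall x, a < x < a + d -> Rabs (K x - L) < eps.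
Proof.
  rewrite filterlim_locally; split.
  - intros H eps He; destruct (H (mkposreal eps He)) as [d Hd]; exists d; split; [apply cond_pos |].
    intros x Hx; apply (Hd x); [change (Rabs (x - a) < d); rewrite Rabs_pos_eq |]; lra.
  - intros H eps; destruct (H eps (cond_pos eps)) as [d [Hd Hnear]]; exists (mkposreal d Hd).
    intros x Hxa Hx; change (Rabs (K x - L) < eps); apply Hnear.
    change (Rabs (x - a) < d) in Hxa; apply Rabs_def2 in Hxa; lra.
Qed.

Lemma filterlim_at_left_iff (a L : R) (K : R -> R) :
  filterlim K (at_left a) (locally L) <->
  forall eps, 0 < eps -> exists d, 0 < d /\ forall x, a - d < x < a -> Rabs (K x - L) < eps.
Proof.
  rewrite filterlim_locally; split.
  - intros H eps He; destruct (H (mkposreal eps He)) as [d Hd]; exists d; split; [apply cond_pos |].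
    intros x Hx; apply (Hd x); [change (Rabs (x - a) < d); rewrite Rabs_left |]; lra.
  - intros H eps; destruct (H eps (cond_pos eps)) as [d [Hd Hnear]]; exists (mkposreal d Hd).
    intros x Hxa Hx; change (Rabs (K x - L) < eps); apply Hnear.
    change (Rabs (x - a) < d) in Hxa; apply Rabs_def2 in Hxa; lra.
Qed.

Lemma at_right_self (a : R) : at_right a (fun x => a < x).
Proof. unfold at_right, at_left, within; apply filter_forall; intros x Hx; exact Hx. Qed.

Lemma at_left_self (a : R) : at_left a (fun x => x < a).
Proof. unfold at_right, at_left, within; apply filter_forall; intros x Hx; exact Hx. Qed.

Lemma at_right_lt (a b : R) : a < b -> at_right a (fun x => x < b).
Proof.
  intros Hab; exists (mkposreal (b - a) ltac:(lra)); intros x Hx _.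
  change (Rabs (x - a) < b - a) in Hx; apply Rabs_def2 in Hx; lra.
Qed.

Lemma at_left_gt (a b : R) : b < a -> at_left a (fun x => b < x).
Proof.
  intros Hab; exists (mkposreal (a - b) ltac:(lra)); intros x Hx _.
  change (Rabs (x - a) < a - b) in Hx; apply Rabs_def2 in Hx; lra.
Qed.

Lemma filterlim_lin {T : Type} {F : (T -> Prop) -> Prop} {FF : Filter F}
    (f g : T -> R) (c l m : R) :
  filterlim f F (locally l) -> filterlim g F (locally m) ->
  filterlim (fun x => f x + c * g x) F (locally (l + c * m)).
Proof.
  intros Hf Hg.
  apply (filterlim_comp_2 (H := locally (c * m)) f (fun x => c * g x) Rplus Hf).
  - apply (filterlim_comp _ _ _ g (fun y => c * y) _ _ _ Hg).
    apply (filterlim_scal_r (V := R_NormedModule) c m).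
  - apply (filterlim_plus (V := R_NormedModule) l (c * m)).
Qed.

Lemma monotone_lim_at_right_0 (K : R -> R) (lo : R) :
  (forall x x', 0 < x -> x <= x' -> x' < 1 -> K x <= K x') ->
  (forall x, 0 < x < 1 -> lo <= K x) ->
  exists L, filterlim K (at_right 0) (locally L).
Proof.
  intros Hmono Hlo.
  destruct (is_inf_exists (fun y => exists x, 0 < x < 1 /\ y = K x) lo) as [L HL].
  { intros y [x [Hx ->]]; auto. }
  { exists (K (1 / 2)), (1 / 2); split; [lra | reflexivity]. }
  exists L; apply filterlim_at_right_iff; intros eps He.
  destruct (is_inf_approx _ _ _ HL He) as [y [[x0 [Hx0 ->]] Hy]].
  exists x0; split; [lra |]; intros x Hx.
  assert (Hx1 : 0 < x < 1) by lra.
  pose proof (Hmono x x0 ltac:(lra) ltac:(lra) ltac:(lra)).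
  pose proof (proj1 HL (K x) (ex_intro _ x (conj Hx1 eq_refl))).
  apply Rabs_def1; lra.
Qed.

(* By the reflection [x |-> 1 - x], [y |-> - y]. *)
Lemma monotone_lim_at_left_1 (K : R -> R) (hi : R) :
  (forall x x', 0 < x -> x <= x' -> x' < 1 -> K x <= K x') ->
  (forall x, 0 < x < 1 -> K x <= hi) ->
  exists L, filterlim K (at_left 1) (locally L).
Proof.
  intros Hmono Hhi.
  destruct (monotone_lim_at_right_0 (fun x => - K (1 - x)) (- hi)) as [L HL].
  - intros x x' Hx Hxx' Hx'; pose proof (Hmono (1 - x') (1 - x)); lra.
  - intros x Hx; pose proof (Hhi (1 - x)); lra.
  - exists (- L); apply filterlim_at_left_iff; intros eps He.
    rewrite filterlim_at_right_iff in HL; destruct (HL eps He) as [d [Hd Hx]].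
    exists d; split; auto; intros x Hxd.
    specialize (Hx (1 - x) ltac:(lra)); rewrite Rabs_minus_sym.
    replace (1 - (1 - x)) with x in Hx by ring.
    replace (- L - K x) with (- K x - L) by ring; auto.
Qed.

(** * Improper integrals over (0, 1) *)

Definition is_prim01 (g K : R -> R) : Prop :=
  forall a b, 0 < a -> a <= b -> b < 1 -> is_RInt g a b (K b - K a).

Definition is_int01 (g : R -> R) (l : R) : Prop :=
  exists K L0 L1, is_prim01 g K /\ filterlim K (at_right 0) (locally L0)
    /\ filterlim K (at_left 1) (locally L1) /\ l = L1 - L0.

Definition ex_int01 (g : R -> R) : Prop := exists l, is_int01 g l.

Lemma is_int01_ext (g h : R -> R) (l : R) :
  (forall x, 0 < x < 1 -> g x = h x) -> is_int01 g l -> is_int01 h l.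
Proof.
  intros E [K [L0 [L1 [HP HL]]]]; exists K, L0, L1; split; auto.
  intros a b Ha Hab Hb; apply (is_RInt_ext g); [| auto].
  intros x Hx; rewrite Rmin_left, Rmax_right in Hx by lra; apply E; lra.
Qed.

Lemma is_int01_lin (g h : R -> R) (c l m : R) :
  is_int01 g l -> is_int01 h m -> is_int01 (fun x => g x + c * h x) (l + c * m).
Proof.
  intros [K [L0 [L1 [HK [HK0 [HK1 ->]]]]]] [H [M0 [M1 [HH [HH0 [HH1 ->]]]]]].
  exists (fun x => K x + c * H x), (L0 + c * M0), (L1 + c * M1).
  repeat split; try (apply filterlim_lin; auto); [| ring].
  intros a b Ha Hab Hb.
  replace (K b + c * H b - (K a + c * H a)) with (plus (K b - K a) (scal c (H b - H a)))
    by (unfold plus, scal; simpl; unfold mult; simpl; ring).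
  apply (is_RInt_plus (V := R_NormedModule)); [auto |].
  apply (is_RInt_scal (V := R_NormedModule)); auto.
Qed.

Lemma is_RInt_const_R (a b c : R) : is_RInt (fun _ => c) a b (c * (b - a)).
Proof.
  replace (c * (b - a)) with (scal (b - a) c) by (unfold scal; simpl; unfold mult; simpl; ring).
  apply (is_RInt_const (V := R_NormedModule)).
Qed.

Lemma is_int01_const (c : R) : is_int01 (fun _ => c) c.
Proof.
  assert (Hc : forall a, filterlim (fun x => c * x) (locally a) (locally (c * a))).
  { intros a; apply continuity_pt_filterlim, continuity_pt_scal.
    apply derivable_continuous_pt, derivable_pt_id. }
  exists (fun x => c * x), (c * 0), (c * 1); repeat split.
  - intros a b _ _ _; replace (c * b - c * a) with (c * (b - a)) by ring; apply is_RInt_const_R.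
  - eapply filterlim_filter_le_1; [| apply Hc]; apply filter_le_within.
  - eapply filterlim_filter_le_1; [| apply Hc]; apply filter_le_within.
  - ring.
Qed.

Lemma monotone_lims_bounds (K : R -> R) (L0 L1 : R) :
  (forall x x', 0 < x -> x <= x' -> x' < 1 -> K x <= K x') ->
  filterlim K (at_right 0) (locally L0) -> filterlim K (at_left 1) (locally L1) ->
  forall x, 0 < x < 1 -> L0 <= K x <= L1.
Proof.
  intros Hmono H0 H1 x Hx; split.
  - apply (closed_filterlim_loc K (fun u => u <= K x) L0 H0); [| apply closed_le].
    apply (filter_imp (fun y => 0 < y /\ y < x)); [intros y Hy; apply Hmono; lra |].
    apply filter_and; [apply at_right_self | apply at_right_lt; lra].
  - apply (closed_filterlim_loc K (fun u => K x <= u) L1 H1); [| apply closed_ge].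
    apply (filter_imp (fun y => x < y /\ y < 1)); [intros y Hy; apply Hmono; lra |].
    apply filter_and; [apply at_left_gt; lra | apply at_left_self].
Qed.

Lemma is_int01_ge0 (g : R -> R) (l : R) :
  (forall x, 0 < x < 1 -> 0 <= g x) -> is_int01 g l -> 0 <= l.
Proof.
  intros Hg [K [L0 [L1 [HP [H0 [H1 ->]]]]]].
  assert (Hmono : forall a b, 0 < a -> a <= b -> b < 1 -> K a <= K b).
  { intros a b Ha Hab Hb.
    enough (0 <= K b - K a) by lra.
    apply (is_RInt_ge_0 g a b _ Hab (HP a b Ha Hab Hb)); intros x Hx; apply Hg; lra. }
  pose proof (monotone_lims_bounds K L0 L1 Hmono H0 H1 (1 / 2) ltac:(lra)); lra.
Qed.

Lemma is_int01_monotone_prim (g K : R -> R) (lo hi : R) :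
  is_prim01 g K ->
  (forall x x', 0 < x -> x <= x' -> x' < 1 -> K x <= K x') ->
  (forall x, 0 < x < 1 -> lo <= K x <= hi) ->
  exists l, is_int01 g l /\ l <= hi - lo.
Proof.
  intros HP Hmono Hbnd.
  destruct (monotone_lim_at_right_0 K lo) as [L0 H0]; [auto | intros x Hx; apply Hbnd; auto |].
  destruct (monotone_lim_at_left_1 K hi) as [L1 H1]; [auto | intros x Hx; apply Hbnd; auto |].
  assert (lo <= L0).
  { apply (closed_filterlim_loc K (fun u => lo <= u) L0 H0); [| apply closed_ge].
    apply (filter_imp (fun x => 0 < x /\ x < 1)); [intros x Hx; apply Hbnd; lra |].
    apply filter_and; [apply at_right_self | apply at_right_lt; lra]. }
  assert (L1 <= hi).
  { apply (closed_filterlim_loc K (fun u => u <= hi) L1 H1); [| apply closed_le].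
    apply (filter_imp (fun x => 0 < x /\ x < 1)); [intros x Hx; apply Hbnd; lra |].
    apply filter_and; [apply at_left_gt; lra | apply at_left_self]. }
  exists (L1 - L0); split; [exists K, L0, L1; auto | lra].
Qed.

Lemma monotone_threshold (f : R -> R) (z : R) :
  (forall x x', 0 < x -> x <= x' -> x' < 1 -> f x <= f x') ->
  exists t, 0 <= t <= 1 /\
    forall x, 0 < x < 1 -> (x < t -> f x < z) /\ (t < x -> z <= f x).
Proof.
  intros Hmono.
  destruct (classic (exists x, 0 < x < 1 /\ z <= f x)) as [Hex | Hno].
  - destruct (is_inf_exists (fun x => 0 < x < 1 /\ z <= f x) 0) as [t Ht];
      [intros x [Hx _]; lra | auto |].
    destruct Hex as [x0 Hx0]; pose proof (proj1 Ht x0 Hx0).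
    exists t; split; [split; [apply (proj2 Ht); intros x [Hx _]; lra | lra] |].
    intros x Hx; split.
    + intros Hxt; apply Rnot_le_lt; intros Hz; pose proof (proj1 Ht x (conj Hx Hz)); lra.
    + intros Htx; destruct (is_inf_approx _ _ (x - t) Ht) as [y [[Hy Hzy] Hyx]]; [lra |].
      apply Rle_trans with (f y); auto; apply Hmono; lra.
  - exists 1; split; [lra |]; intros x Hx; split; [| lra].
    intros _; apply Rnot_le_lt; intros Hz; apply Hno; eauto.
Qed.

(* The level set [{z <= f}] is an interval ending at 1, starting at a threshold [t];
   [K (max x t)] is then a primitive of the cut function. *)
Lemma ex_int01_cut (f g : R -> R) (z : R) :
  (forall x x', 0 < x -> x <= x' -> x' < 1 -> f x <= f x') ->
  ex_int01 g -> ex_int01 (fun x => if Rle_dec z (f x) then g x else 0).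
Proof.
  intros Hmono [l [K [L0 [L1 [HP [H0 [H1 _]]]]]]].
  destruct (monotone_threshold f z Hmono) as [t [Ht Hthr]].
  set (h := fun x => if Rle_dec z (f x) then g x else 0).
  assert (Hlo : forall x, 0 < x < 1 -> x < t -> h x = 0).
  { intros x Hx Hxt; unfold h; destruct (Rle_dec z (f x)); auto.
    pose proof (proj1 (Hthr x Hx) Hxt); lra. }
  assert (Hhi : forall x, 0 < x < 1 -> t < x -> h x = g x).
  { intros x Hx Htx; unfold h; destruct (Rle_dec z (f x)) as [_ | Hn]; auto.
    exfalso; apply Hn, (proj2 (Hthr x Hx) Htx). }
  assert (Hzero : forall a b, 0 < a -> a <= b -> b <= t -> b < 1 -> is_RInt h a b 0).
  { intros a b Ha Hab Hbt Hb; rewrite <- (Rmult_0_l (b - a)).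
    apply (is_RInt_ext (fun _ => 0)); [| apply is_RInt_const_R].
    intros x Hx; rewrite Rmin_left, Rmax_right in Hx by lra; symmetry; apply Hlo; lra. }
  assert (Hsame : forall a b, 0 < a -> t <= a -> a <= b -> b < 1 -> is_RInt h a b (K b - K a)).
  { intros a b Ha Hta Hab Hb; apply (is_RInt_ext g); [| apply HP; lra].
    intros x Hx; rewrite Rmin_left, Rmax_right in Hx by lra; symmetry; apply Hhi; lra. }
  set (K' := fun x => K (Rmax x t)).
  assert (HP' : is_prim01 h K').
  { intros a b Ha Hab Hb; unfold K'.
    destruct (Rle_or_lt b t) as [Hbt | Htb]; [| destruct (Rle_or_lt t a) as [Hta | Hat]].
    - rewrite !Rmax_right by lra; rewrite Rminus_diag; apply Hzero; lra.
    - rewrite !Rmax_left by lra; apply Hsame; lra.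
    - rewrite Rmax_left, Rmax_right by lra.
      replace (K b - K t) with (plus 0 (K b - K t)) by (unfold plus; simpl; ring).
      apply (is_RInt_Chasles (V := R_NormedModule) h a t b); [apply Hzero | apply Hsame]; lra. }
  assert (H0' : exists L, filterlim K' (at_right 0) (locally L)).
  { destruct (Req_dec t 0) as [-> | Ht0].
    - exists L0; apply (filterlim_ext_loc K); [| auto].
      apply (filter_imp (fun x => 0 < x)); [| apply at_right_self].
      intros x Hx; unfold K'; rewrite Rmax_left; lra.
    - exists (K t); apply (filterlim_ext_loc (fun _ => K t)); [| apply filterlim_const].
      apply (filter_imp (fun x => x < t)); [| apply at_right_lt; lra].
      intros x Hx; unfold K'; rewrite Rmax_right; lra. }
  assert (H1' : exists L, filterlim K' (at_left 1) (locally L)).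
  { destruct (Req_dec t 1) as [-> | Ht1].
    - exists (K 1); apply (filterlim_ext_loc (fun _ => K 1)); [| apply filterlim_const].
      apply (filter_imp (fun x => x < 1)); [| apply at_left_self].
      intros x Hx; unfold K'; rewrite Rmax_right; lra.
    - exists L1; apply (filterlim_ext_loc K); [| auto].
      apply (filter_imp (fun x => t < x)); [| apply at_left_gt; lra].
      intros x Hx; unfold K'; rewrite Rmax_left; lra. }
  destruct H0' as [M0 HM0]; destruct H1' as [M1 HM1].
  exists (M1 - M0), K', M0, M1; auto.
Qed.

Lemma improper_int_of_is_int01 (g : R -> R) (l : R) : is_int01 g l -> improper_int g 0 1 l.
Proof.
  intros [K [L0 [L1 [HP [H0 [H1 ->]]]]]] eps He.
  rewrite filterlim_at_right_iff in H0; rewrite filterlim_at_left_iff in H1.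
  destruct (H0 (eps / 2) ltac:(lra)) as [d0 [Hd0 P0]].
  destruct (H1 (eps / 2) ltac:(lra)) as [d1 [Hd1 P1]].
  pose proof (Rmin_l (Rmin d0 d1) (1 / 2)); pose proof (Rmin_r (Rmin d0 d1) (1 / 2)).
  pose proof (Rmin_l d0 d1); pose proof (Rmin_r d0 d1).
  assert (0 < Rmin (Rmin d0 d1) (1 / 2)) by (repeat apply Rmin_case; lra).
  set (d := Rmin (Rmin d0 d1) (1 / 2)) in *.
  exists d; split; [lra |]; intros a b Ha Hb.
  pose proof (HP a b ltac:(lra) ltac:(lra) ltac:(lra)) as HI.
  exists (ex_RInt_Reals_0 _ _ _ (ex_intro _ _ HI)).
  rewrite <- RInt_Reals, (is_RInt_unique _ _ _ _ HI).
  specialize (P0 a ltac:(lra)); specialize (P1 b ltac:(lra)).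
  apply Rabs_def2 in P0; apply Rabs_def2 in P1; apply Rabs_def1; lra.
Qed.

Lemma improper_int01_unique (g : R -> R) (l l' : R) :
  improper_int g 0 1 l -> improper_int g 0 1 l' -> l = l'.
Proof.
  intros H1 H2; apply eq_of_dist_lt; intros eps He.
  destruct (H1 (eps / 2)) as [d1 [Hd1 P1]]; [lra |].
  destruct (H2 (eps / 2)) as [d2 [Hd2 P2]]; [lra |].
  pose proof (Rmin_l (Rmin d1 d2) 1); pose proof (Rmin_r (Rmin d1 d2) 1).
  pose proof (Rmin_l d1 d2); pose proof (Rmin_r d1 d2).
  assert (0 < Rmin (Rmin d1 d2) 1) by (repeat apply Rmin_case; lra).
  set (d := Rmin (Rmin d1 d2) 1) in *.
  destruct (P1 (d / 2) (1 - d / 2)) as [pr1 E1]; [lra | lra |].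
  destruct (P2 (d / 2) (1 - d / 2)) as [pr2 E2]; [lra | lra |].
  rewrite (RiemannInt_P5 pr1 pr2) in E1.
  replace (l - l') with (- (RiemannInt pr2 - l) + (RiemannInt pr2 - l')) by ring.
  eapply Rle_lt_trans; [apply Rabs_triang |]; rewrite Rabs_Ropp; lra.
Qed.

Lemma Int_is_int01 (g : R -> R) (l : R) : is_int01 g l -> Int g 0 1 = l.
Proof.
  intros H; apply improper_int_of_is_int01 in H.
  unfold Int; apply (improper_int01_unique g); [apply choose_R_spec; eauto | exact H].
Qed.

Lemma ex_int01_ext (g h : R -> R) :
  (forall x, 0 < x < 1 -> g x = h x) -> ex_int01 g -> ex_int01 h.
Proof. intros E [l Hl]; exists l; eapply is_int01_ext; eauto. Qed.

Lemma ex_int01_lin (g h : R -> R) (c : R) :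
  ex_int01 g -> ex_int01 h -> ex_int01 (fun x => g x + c * h x).
Proof. intros [l Hl] [m Hm]; eexists; apply is_int01_lin; eauto. Qed.

Lemma Int_le (g h : R -> R) :
  ex_int01 g -> ex_int01 h -> (forall x, 0 < x < 1 -> g x <= h x) -> Int g 0 1 <= Int h 0 1.
Proof.
  intros [l Hl] [m Hm] Hgh; rewrite (Int_is_int01 g l Hl), (Int_is_int01 h m Hm).
  enough (0 <= m + -1 * l) by lra.
  apply (is_int01_ge0 (fun x => h x + -1 * g x)); [intros x Hx; pose proof (Hgh x Hx); lra |].
  apply is_int01_lin; auto.
Qed.

(** * The Gaussian integral *)

Definition gauss (t : R) : R := exp (- (t * t)).
Definition gauss_int (y : R) : R := RInt gauss 0 y.

(* [gauss_int y ^ 2 + gauss_aux y] has derivative zero and equals [atan 1] at [0]. *)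
Definition gauss_kernel (x t : R) : R := exp (- (x * x) * (1 + t * t)) / (1 + t * t).
Definition gauss_aux (x : R) : R := RInt (gauss_kernel x) 0 1.

Lemma ex_RInt_continuous_R (f : R -> R) (a b : R) :
  (forall z, continuous f z) -> ex_RInt f a b.
Proof. intros Hf. apply (@ex_RInt_continuous R_CompleteNormedModule); auto. Qed.

Lemma continuous_gauss (x : R) : continuous gauss x.
Proof.
  apply (ex_derive_continuous (K := R_AbsRing) (V := R_NormedModule)).
  unfold gauss; auto_derive; auto.
Qed.

Lemma ex_RInt_gauss (a b : R) : ex_RInt gauss a b.
Proof. apply ex_RInt_continuous_R, continuous_gauss. Qed.

Lemma gauss_int_0 : gauss_int 0 = 0.
Proof. apply (@RInt_point R_CompleteNormedModule). Qed.

Lemma is_derive_gauss_int (y : R) : is_derive gauss_int y (gauss y).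
Proof.
  apply (is_derive_RInt gauss gauss_int 0 y).
  - apply filter_forall; intros b.
    apply (@RInt_correct R_CompleteNormedModule), ex_RInt_gauss.
  - apply continuous_gauss.
Qed.

Lemma is_derive_gauss_kernel (x t : R) :
  is_derive (fun z => gauss_kernel z t) x (- 2 * x * exp (- (x * x) * (1 + t * t))).
Proof.
  assert (0 < 1 + t * t) by nra.
  unfold gauss_kernel; auto_derive; [lra | field; lra].
Qed.

Lemma gauss_rescale (x : R) : x <> 0 -> RInt (fun t => gauss (x * t)) 0 1 = gauss_int x / x.
Proof.
  intros Hx.
  assert (Hex : ex_RInt (fun t => gauss (x * t + 0)) 0 1).
  { apply ex_RInt_continuous_R; intros z.
    apply (continuous_comp (fun t => x * t + 0) gauss), continuous_gauss.
    apply (ex_derive_continuous (K := R_AbsRing) (V := R_NormedModule)); auto_derive; auto. }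
  transitivity (RInt (fun t => gauss (x * t + 0)) 0 1).
  { apply RInt_ext; intros; rewrite Rplus_0_r; reflexivity. }
  apply Rmult_eq_reg_l with x; auto.
  replace (x * (gauss_int x / x)) with (gauss_int x) by (field; auto).
  change (scal x (RInt (fun t => gauss (x * t + 0)) 0 1) = gauss_int x).
  rewrite <- (@RInt_scal R_CompleteNormedModule) by exact Hex.
  rewrite (@RInt_comp_lin R_CompleteNormedModule).
  - unfold gauss_int; f_equal; ring.
  - replace (x * 0 + 0) with 0 by ring; replace (x * 1 + 0) with x by ring; apply ex_RInt_gauss.
Qed.

Lemma is_derive_gauss_aux (x : R) : is_derive gauss_aux x (- 2 * gauss x * gauss_int x).
Proof.
  set (dk := fun u t => - 2 * u * exp (- (u * u) * (1 + t * t))).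
  assert (Hdk : forall u t, Derive (fun z => gauss_kernel z t) u = dk u t).
  { intros; apply is_derive_unique, is_derive_gauss_kernel. }
  assert (Hcont_dk : forall u t, continuity_2d_pt dk u t).
  { intros u t; unfold dk.
    apply continuity_2d_pt_mult.
    - apply continuity_2d_pt_mult; [apply continuity_2d_pt_const | apply continuity_2d_pt_id1].
    - apply continuity_1d_2d_pt_comp; [apply derivable_continuous_pt, derivable_exp |].
      apply continuity_2d_pt_mult.
      + apply continuity_2d_pt_opp, continuity_2d_pt_mult; apply continuity_2d_pt_id1.
      + apply continuity_2d_pt_plus; [apply continuity_2d_pt_const |].
        apply continuity_2d_pt_mult; apply continuity_2d_pt_id2. }
  assert (Hval : RInt (fun t => Derive (fun u => gauss_kernel u t) x) 0 1
                 = - 2 * gauss x * gauss_int x).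
  { rewrite (RInt_ext (fun t => Derive (fun u => gauss_kernel u t) x)
                       (fun t => scal (- 2 * x * gauss x) (gauss (x * t)))).
    2: { intros t _; rewrite Hdk; unfold dk, gauss, scal; simpl; unfold mult; simpl.
         replace (- (x * x) * (1 + t * t)) with (- (x * x) + - (x * t * (x * t))) by ring.
         rewrite exp_plus; ring. }
    rewrite (@RInt_scal R_CompleteNormedModule).
    2: { apply ex_RInt_continuous_R; intros z.
         apply (continuous_comp (fun t => x * t) gauss), continuous_gauss.
         apply (ex_derive_continuous (K := R_AbsRing) (V := R_NormedModule)); auto_derive; auto. }
    unfold scal; simpl; unfold mult; simpl.
    destruct (Req_dec x 0) as [-> | Hx].
    - rewrite gauss_int_0; ring.
    - rewrite gauss_rescale by auto; field; auto. }
  rewrite <- Hval; unfold gauss_aux.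
  apply is_derive_RInt_param_aux.
  - apply filter_forall; intros u t _; eexists; apply is_derive_gauss_kernel.
  - intros t _; eapply continuity_2d_pt_ext; [intros u v; symmetry; apply Hdk | apply Hcont_dk].
  - apply filter_forall; intros u; apply ex_RInt_continuous_R; intros t.
    apply (ex_derive_continuous (K := R_AbsRing) (V := R_NormedModule)).
    unfold gauss_kernel; auto_derive; nra.
  - eapply ex_RInt_ext; [intros t _; symmetry; apply Hdk |].
    apply ex_RInt_continuous_R; intros z.
    apply (ex_derive_continuous (K := R_AbsRing) (V := R_NormedModule)).
    unfold dk; auto_derive; auto.
Qed.

Lemma gauss_aux_0 : gauss_aux 0 = PI / 4.
Proof.
  unfold gauss_aux; rewrite <- atan_1.
  replace (atan 1) with (atan 1 - atan 0) by (rewrite atan_0; ring).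
  apply is_RInt_unique; eapply is_RInt_ext.
  2: { apply (@is_RInt_derive R_CompleteNormedModule atan (fun t => / (1 + t ^ 2))).
       - intros; apply is_derive_Reals, derivable_pt_lim_atan.
       - intros; apply (ex_derive_continuous (K := R_AbsRing) (V := R_NormedModule)).
         auto_derive; nra. }
  intros t _; unfold gauss_kernel; simpl.
  replace (- (0 * 0) * (1 + t * t)) with 0 by ring; rewrite exp_0; field; nra.
Qed.

Lemma gauss_int_sqr_add_aux (y : R) : gauss_int y * gauss_int y + gauss_aux y = PI / 4.
Proof.
  set (F := fun y => gauss_int y * gauss_int y + gauss_aux y).
  assert (HF : forall z, is_derive F z (@zero R_AbelianMonoid)).
  { intros z; evar (l : R); replace (@zero R_AbelianMonoid) with l.
    - apply (@is_derive_plus R_AbsRing R_NormedModule).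
      + apply (is_derive_mult gauss_int gauss_int); try apply is_derive_gauss_int.
        intros; apply Rmult_comm.
      + apply is_derive_gauss_aux.
    - unfold l, plus, mult, zero; simpl; unfold mult; simpl; ring. }
  change (F y = PI / 4); transitivity (F 0).
  - destruct (Rtotal_order 0 y) as [Hy | [<- | Hy]]; [symmetry | reflexivity |];
      apply eq_is_derive; auto.
  - unfold F; rewrite gauss_int_0, gauss_aux_0; ring.
Qed.

Lemma gauss_aux_bounds (y : R) : 0 <= gauss_aux y <= gauss y.
Proof.
  assert (Hex : ex_RInt (gauss_kernel y) 0 1).
  { apply ex_RInt_continuous_R; intros t.
    apply (ex_derive_continuous (K := R_AbsRing) (V := R_NormedModule)).
    unfold gauss_kernel; auto_derive; nra. }
  unfold gauss_aux; split.
  - apply RInt_ge_0; auto; [lra |]. intros t _; unfold gauss_kernel.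
    apply Rlt_le, Rdiv_lt_0_compat; [apply exp_pos | nra].
  - replace (gauss y) with (RInt (fun _ => gauss y) 0 1)
      by (rewrite RInt_const; unfold scal; simpl; unfold mult; simpl; ring).
    apply RInt_le; auto; [lra | apply ex_RInt_const |].
    intros t _; unfold gauss_kernel, gauss.
    assert (1 <= 1 + t * t) by nra.
    apply Rle_trans with (exp (- (y * y) * (1 + t * t))).
    + apply Rmult_le_reg_r with (1 + t * t); [lra |].
      unfold Rdiv; rewrite Rmult_assoc, Rinv_l by lra.
      pose proof (exp_pos (- (y * y) * (1 + t * t))); nra.
    + apply exp_le_compat; nra.
Qed.

Lemma gauss_int_opp (y : R) : gauss_int (- y) = - gauss_int y.
Proof.
  set (F := fun y => gauss_int (- y) + gauss_int y).
  assert (HF : forall z, is_derive F z (@zero R_AbelianMonoid)).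
  { intros z; evar (l : R); replace (@zero R_AbelianMonoid) with l.
    - apply (@is_derive_plus R_AbsRing R_NormedModule); [| apply is_derive_gauss_int].
      apply (is_derive_comp gauss_int Ropp); [apply is_derive_gauss_int |].
      apply (@is_derive_opp R_AbsRing R_NormedModule (fun x => x)), is_derive_id.
    - unfold l, plus, scal, opp, one, zero, gauss; simpl; unfold mult; simpl.
      replace (- z * - z) with (z * z) by ring; ring. }
  enough (F y = 0) by (unfold F in *; lra).
  transitivity (F 0).
  - destruct (Rtotal_order 0 y) as [Hy | [<- | Hy]]; [symmetry | reflexivity |];
      apply eq_is_derive; auto.
  - unfold F; rewrite Ropp_0, gauss_int_0; ring.
Qed.

Lemma gauss_int_lt (a b : R) : a < b -> gauss_int a < gauss_int b.
Proof.
  intros Hab; unfold gauss_int.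
  rewrite <- (RInt_Chasles gauss 0 a b) by apply ex_RInt_gauss.
  assert (0 < RInt gauss a b)
    by (apply RInt_gt_0; auto; intros; [apply exp_pos | apply continuous_gauss]).
  simpl; unfold plus; simpl; lra.
Qed.

Lemma sqrtPI_pos : 0 < sqrt PI.
Proof. apply sqrt_lt_R0, PI_RGT_0. Qed.

(* From [gauss_int y ^ 2 = PI / 4 - gauss_aux y] and [0 <= gauss_aux y <= gauss y]. *)
Lemma gauss_int_tail (y : R) :
  0 <= y -> 0 <= sqrt PI / 2 - gauss_int y <= 2 * gauss y / sqrt PI.
Proof.
  intros Hy.
  pose proof (gauss_int_sqr_add_aux y); pose proof (gauss_aux_bounds y).
  pose proof sqrtPI_pos.
  assert (Hpi2 : sqrt PI * sqrt PI = PI) by (apply sqrt_sqrt; left; apply PI_RGT_0).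
  assert (Hg : 0 <= gauss_int y) by (rewrite <- gauss_int_0;
    destruct (Req_dec y 0) as [-> | ?]; [lra | left; apply gauss_int_lt; lra]).
  assert (Hprod : (sqrt PI / 2 - gauss_int y) * (sqrt PI / 2 + gauss_int y) = gauss_aux y) by nra.
  assert (0 <= sqrt PI / 2 - gauss_int y) by nra.
  split; auto.
  apply Rmult_le_reg_r with (sqrt PI / 2); [lra |].
  replace (2 * gauss y / sqrt PI * (sqrt PI / 2)) with (gauss y) by (field; lra).
  nra.
Qed.

(** * The normal distribution function *)

Definition normal_cdf (x : R) : R := / 2 + gauss_int (x / sqrt 2) / sqrt PI.

Lemma sqrt2_pos : 0 < sqrt 2.
Proof. apply sqrt_lt_R0; lra. Qed.

Lemma continuous_phi_density (x : R) : continuous phi_density x.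
Proof.
  apply (ex_derive_continuous (K := R_AbsRing) (V := R_NormedModule)).
  unfold phi_density; auto_derive; auto.
Qed.

Lemma phi_density_pos (x : R) : 0 < phi_density x.
Proof.
  unfold phi_density; apply Rmult_lt_0_compat; [| apply exp_pos].
  apply Rinv_0_lt_compat, sqrt_lt_R0; pose proof PI_RGT_0; lra.
Qed.

Lemma derivable_pt_lim_normal_cdf (x : R) : derivable_pt_lim normal_cdf x (phi_density x).
Proof.
  pose proof sqrt2_pos; pose proof sqrtPI_pos.
  assert (Hin : derivable_pt_lim (fun y => gauss_int (y / sqrt 2)) x
                  (/ sqrt 2 * gauss (x / sqrt 2))).
  { apply is_derive_Reals, (is_derive_comp gauss_int (fun y => y / sqrt 2));
      [apply is_derive_gauss_int | auto_derive; [lra | field; lra]]. }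
  replace (phi_density x) with (0 + / sqrt 2 * gauss (x / sqrt 2) * / sqrt PI).
  - apply (derivable_pt_lim_plus (fun _ => / 2)); [apply derivable_pt_lim_const |].
    apply (derivable_pt_lim_scal_right (fun y => gauss_int (y / sqrt 2))), Hin.
  - unfold phi_density, gauss.
    assert (H2 : sqrt 2 * sqrt 2 = 2) by (apply sqrt_sqrt; lra).
    rewrite sqrt_mult by (pose proof PI_RGT_0; lra).
    replace (- (x / sqrt 2 * (x / sqrt 2))) with (- x ^ 2 / 2); [field; lra |].
    replace (x / sqrt 2 * (x / sqrt 2)) with (x * x / (sqrt 2 * sqrt 2)) by (field; lra).
    rewrite H2; field.
Qed.

Lemma continuity_normal_cdf (x : R) : continuity_pt normal_cdf x.
Proof. apply derivable_continuous_pt; eexists; apply derivable_pt_lim_normal_cdf. Qed.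

Lemma normal_cdf_lt (a b : R) : a < b -> normal_cdf a < normal_cdf b.
Proof.
  intros Hab; unfold normal_cdf.
  pose proof sqrt2_pos; pose proof sqrtPI_pos.
  assert (Hab' : a / sqrt 2 < b / sqrt 2)
    by (apply Rmult_lt_compat_r; [apply Rinv_0_lt_compat |]; lra).
  pose proof (gauss_int_lt _ _ Hab').
  apply Rplus_lt_compat_l, Rmult_lt_compat_r; [apply Rinv_0_lt_compat |]; lra.
Qed.

Lemma normal_cdf_le (a b : R) : a <= b -> normal_cdf a <= normal_cdf b.
Proof.
  intros [Hab | ->]; [left; apply normal_cdf_lt |]; auto; lra.
Qed.

Lemma normal_cdf_opp (x : R) : normal_cdf (- x) = 1 - normal_cdf x.
Proof.
  pose proof sqrt2_pos; pose proof sqrtPI_pos; unfold normal_cdf.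
  replace (- x / sqrt 2) with (- (x / sqrt 2)) by (field; lra).
  rewrite gauss_int_opp; field; lra.
Qed.

Lemma normal_cdf_upper_tail (x : R) :
  0 <= x -> 0 <= 1 - normal_cdf x <= 4 / (PI * (2 + x * x)).
Proof.
  intros Hx.
  pose proof sqrt2_pos; pose proof sqrtPI_pos.
  assert (H2 : sqrt 2 * sqrt 2 = 2) by (apply sqrt_sqrt; lra).
  assert (HPI : sqrt PI * sqrt PI = PI) by (apply sqrt_sqrt; left; apply PI_RGT_0).
  set (y := x / sqrt 2).
  assert (Hy : 0 <= y) by (apply Rmult_le_pos; [| left; apply Rinv_0_lt_compat]; lra).
  assert (Hyy : y * y = x * x / 2).
  { unfold y; replace (x / sqrt 2 * (x / sqrt 2)) with (x * x / (sqrt 2 * sqrt 2)) by (field; lra).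
    rewrite H2; reflexivity. }
  assert (Hexp : 1 + y * y <= exp (y * y)) by apply exp_ineq1_le.
  assert (Hgauss : gauss y * (1 + y * y) <= 1).
  { unfold gauss; rewrite exp_Ropp.
    apply Rmult_le_reg_l with (exp (y * y)); [apply exp_pos |].
    rewrite <- Rmult_assoc, Rinv_r by (apply Rgt_not_eq, exp_pos); nra. }
  destruct (gauss_int_tail y Hy) as [Hlo Hhi].
  replace (1 - normal_cdf x) with ((sqrt PI / 2 - gauss_int y) / sqrt PI)
    by (unfold normal_cdf; fold y; field; lra).
  split; [apply Rmult_le_pos; [| left; apply Rinv_0_lt_compat]; lra |].
  apply Rle_trans with (2 * gauss y / PI).
  - replace (2 * gauss y / PI) with (2 * gauss y / sqrt PI * / sqrt PI)
      by (unfold Rdiv; rewrite Rmult_assoc, <- Rinv_mult, HPI; reflexivity).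
    apply Rmult_le_compat_r; [left; apply Rinv_0_lt_compat; lra | exact Hhi].
  - pose proof PI_RGT_0.
    apply Rmult_le_reg_r with (PI * (2 + x * x) / 2); [nra |].
    replace (4 / (PI * (2 + x * x)) * (PI * (2 + x * x) / 2)) with 2 by (field; nra).
    replace (2 * gauss y / PI * (PI * (2 + x * x) / 2)) with (2 * (gauss y * (1 + y * y)))
      by (rewrite Hyy; field; lra).
    lra.
Qed.

Lemma normal_cdf_range (x : R) : 0 < normal_cdf x < 1.
Proof.
  assert (Hup : forall y, 0 <= y -> normal_cdf y <= 1)
    by (intros y Hy; pose proof (normal_cdf_upper_tail y Hy); lra).
  split.
  - rewrite <- (Ropp_involutive x), normal_cdf_opp.
    pose proof (normal_cdf_lt (- x) (Rabs x + 1)); pose proof (Rabs_pos x).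
    pose proof (Rle_abs (- x)); rewrite Rabs_Ropp in *.
    pose proof (Hup (Rabs x + 1)); lra.
  - pose proof (normal_cdf_lt x (Rabs x + 1)); pose proof (Rle_abs x); pose proof (Rabs_pos x).
    pose proof (Hup (Rabs x + 1)); lra.
Qed.

Lemma normal_cdf_tails (eps x : R) :
  0 < eps <= 1 -> 2 / eps <= x -> normal_cdf (- x) < eps /\ 1 - eps < normal_cdf x.
Proof.
  intros He Hx.
  assert (Hx0 : 0 <= x) by (pose proof (Rdiv_lt_0_compat 2 eps ltac:(lra) ltac:(lra)); lra).
  pose proof (normal_cdf_upper_tail x Hx0) as [_ Ht].
  assert (Hsmall : 4 / (PI * (2 + x * x)) < eps).
  { pose proof PI2_3_2.
    assert (2 <= x * eps) by (apply Rmult_le_reg_r with (/ eps);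
      [apply Rinv_0_lt_compat; lra | unfold Rdiv in Hx; rewrite Rmult_assoc, Rinv_r; lra]).
    apply Rmult_lt_reg_r with (PI * (2 + x * x)); [nra |].
    replace (4 / (PI * (2 + x * x)) * (PI * (2 + x * x))) with 4 by (field; nra).
    assert (2 <= x) by (apply Rle_trans with (2 / eps); auto;
      apply Rmult_le_reg_r with eps; [lra | unfold Rdiv; rewrite Rmult_assoc, Rinv_l; lra]).
    assert (4 <= eps * (x * x)) by nra.
    nra. }
  rewrite normal_cdf_opp; lra.
Qed.

Lemma int_minf_to_unique (f : R -> R) (x l l' : R) :
  int_minf_to f x l -> int_minf_to f x l' -> l = l'.
Proof.
  intros H1 H2; apply eq_of_dist_lt; intros eps He.
  destruct (H1 (eps / 2)) as [A1 HA1]; [lra |].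
  destruct (H2 (eps / 2)) as [A2 HA2]; [lra |].
  pose proof (Rmin_l A1 A2); pose proof (Rmin_r A1 A2).
  destruct (HA1 (Rmin A1 A2 - 1)) as [pr1 E1]; [lra |].
  destruct (HA2 (Rmin A1 A2 - 1)) as [pr2 E2]; [lra |].
  rewrite (RiemannInt_P5 pr1 pr2) in E1.
  replace (l - l') with (- (RiemannInt pr2 - l) + (RiemannInt pr2 - l')) by ring.
  eapply Rle_lt_trans; [apply Rabs_triang |]; rewrite Rabs_Ropp; lra.
Qed.

Lemma is_RInt_phi_density (a b : R) :
  is_RInt phi_density a b (normal_cdf b - normal_cdf a).
Proof.
  apply (@is_RInt_derive R_CompleteNormedModule).
  - intros; apply is_derive_Reals, derivable_pt_lim_normal_cdf.
  - intros; apply continuous_phi_density.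
Qed.

Lemma Phi_normal_cdf : Phi = normal_cdf.
Proof.
  apply functional_extensionality; intros x.
  assert (H : int_minf_to phi_density x (normal_cdf x)).
  { intros eps He.
    set (e := Rmin eps 1).
    assert (He1 : 0 < e <= 1) by (unfold e; split; [apply Rmin_case | apply Rmin_r]; lra).
    exists (- (2 / e)); intros a Ha.
    exists (ex_RInt_Reals_0 _ _ _ (ex_intro _ _ (is_RInt_phi_density a x))).
    rewrite <- RInt_Reals, (is_RInt_unique _ _ _ _ (is_RInt_phi_density a x)).
    destruct (normal_cdf_tails e (- a)) as [Ha' _]; [auto | lra |].
    rewrite Ropp_involutive in Ha'.
    assert (e <= eps) by apply Rmin_l; pose proof (normal_cdf_range a).
    replace (normal_cdf x - normal_cdf a - normal_cdf x) with (- normal_cdf a) by ring.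
    rewrite Rabs_Ropp, Rabs_pos_eq; lra. }
  unfold Phi; apply (int_minf_to_unique phi_density x); [apply choose_R_spec; eauto | exact H].
Qed.

Lemma normal_cdf_surj (p : R) : 0 < p < 1 -> exists y, normal_cdf y = p.
Proof.
  intros Hp.
  set (e := Rmin p (1 - p)).
  assert (He : e <= p /\ e <= 1 - p) by (split; [apply Rmin_l | apply Rmin_r]).
  assert (He0 : 0 < e) by (apply Rmin_case; lra).
  destruct (normal_cdf_tails e (2 / e)) as [Hlo Hhi]; [lra | lra |].
  assert (0 < 2 / e) by (apply Rdiv_lt_0_compat; lra).
  destruct (IVT_interv (fun y => normal_cdf y - p) (- (2 / e)) (2 / e)) as [z [_ Hz]];
    [| lra | lra | lra | exists z; lra].
  intros; apply continuity_pt_minus; [apply continuity_normal_cdf | apply continuity_pt_const].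
  intros ? ?; reflexivity.
Qed.

Lemma normal_cdf_Phi_inv (p : R) : 0 < p < 1 -> normal_cdf (Phi_inv p) = p.
Proof.
  intros Hp; unfold Phi_inv; rewrite Phi_normal_cdf.
  apply (choose_R_spec (fun y => normal_cdf y = p)), normal_cdf_surj, Hp.
Qed.

Lemma Phi_inv_lt (p p' : R) : 0 < p < 1 -> 0 < p' < 1 -> p < p' -> Phi_inv p < Phi_inv p'.
Proof.
  intros Hp Hp' Hlt; destruct (Rle_or_lt (Phi_inv p') (Phi_inv p)) as [Hle | ?]; auto.
  apply normal_cdf_le in Hle; rewrite !normal_cdf_Phi_inv in Hle by auto; lra.
Qed.

Lemma Phi_inv_le (p p' : R) : 0 < p < 1 -> 0 < p' < 1 -> p <= p' -> Phi_inv p <= Phi_inv p'.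
Proof. intros Hp Hp' [Hlt | ->]; [left; apply Phi_inv_lt | right]; auto. Qed.

Lemma derivable_pt_lim_Phi_inv (p : R) :
  0 < p < 1 -> derivable_pt_lim Phi_inv p (/ phi_density (Phi_inv p)).
Proof.
  intros Hp.
  set (lb := p / 2); set (ub := (1 + p) / 2).
  assert (Hlb : 0 < lb < 1) by (unfold lb; lra).
  assert (Hub : 0 < ub < 1) by (unfold ub; lra).
  assert (Hint : lb < p < ub) by (unfold lb, ub; lra).
  assert (Prf : forall a, Phi_inv lb <= a <= Phi_inv ub -> derivable_pt normal_cdf a)
    by (intros a _; eexists; apply derivable_pt_lim_normal_cdf).
  assert (Hmid : Phi_inv lb <= Phi_inv p <= Phi_inv ub) by (split; apply Phi_inv_le; lra).
  assert (Hcont : continuity_pt Phi_inv p).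
  { apply (continuity_pt_recip_interv normal_cdf Phi_inv (Phi_inv lb) (Phi_inv ub)).
    - apply Phi_inv_lt; lra.
    - intros; apply normal_cdf_lt; auto.
    - intros x Hx1 Hx2; rewrite normal_cdf_Phi_inv in Hx1, Hx2 by auto.
      unfold comp, id; apply normal_cdf_Phi_inv; lra.
    - intros x Hx1 Hx2; rewrite normal_cdf_Phi_inv in Hx1, Hx2 by auto.
      split; apply Phi_inv_le; lra.
    - intros; apply continuity_normal_cdf.
    - rewrite !normal_cdf_Phi_inv by auto; lra. }
  assert (Hder : derive_pt normal_cdf (Phi_inv p) (Prf (Phi_inv p) Hmid)
                 = phi_density (Phi_inv p))
    by (apply derive_pt_eq_0, derivable_pt_lim_normal_cdf).
  pose proof (phi_density_pos (Phi_inv p)).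
  replace (/ phi_density (Phi_inv p))
    with (1 / derive_pt normal_cdf (Phi_inv p) (Prf (Phi_inv p) Hmid))
    by (rewrite Hder; field; lra).
  apply (derivable_pt_lim_recip_interv normal_cdf Phi_inv lb ub p Prf Hcont); try lra.
  intros x Hx; unfold comp, id; apply normal_cdf_Phi_inv; lra.
Qed.

Definition bs_Q (M x : R) : R := normal_cdf (M + Phi_inv x).

(* [phi (M + y) / phi y] at [y = Phi_inv x], the derivative of [bs_Q M] by the chain rule. *)
Definition bs_q (M x : R) : R := exp (- M * Phi_inv x - M * M / 2).

Lemma phi_density_shift (M y : R) :
  phi_density (M + y) / phi_density y = exp (- M * y - M * M / 2).
Proof.
  unfold phi_density.
  assert (Hc : 0 < sqrt (2 * PI)) by (apply sqrt_lt_R0; pose proof PI_RGT_0; lra).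
  pose proof (exp_pos (- y ^ 2 / 2)).
  replace (/ sqrt (2 * PI) * exp (- (M + y) ^ 2 / 2) / (/ sqrt (2 * PI) * exp (- y ^ 2 / 2)))
    with (exp (- (M + y) ^ 2 / 2) * / exp (- y ^ 2 / 2)) by (field; lra).
  rewrite <- exp_Ropp, <- exp_plus; f_equal; field.
Qed.

Lemma derivable_pt_lim_bs_Q (M x : R) :
  0 < x < 1 -> derivable_pt_lim (bs_Q M) x (bs_q M x).
Proof.
  intros Hx; unfold bs_q; rewrite <- phi_density_shift.
  replace (phi_density (M + Phi_inv x) / phi_density (Phi_inv x))
    with (phi_density (M + Phi_inv x) * (0 + / phi_density (Phi_inv x))) by (unfold Rdiv; ring).
  apply (derivable_pt_lim_comp (fun x => M + Phi_inv x) normal_cdf).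
  - apply (derivable_pt_lim_plus (fun _ => M)); [apply derivable_pt_lim_const |].
    apply derivable_pt_lim_Phi_inv, Hx.
  - apply derivable_pt_lim_normal_cdf.
Qed.

Lemma qBS_bs_q (mu r sigma dt x : R) :
  0 < x < 1 -> qBS mu r sigma dt x = bs_q (Mpar mu r sigma dt) x.
Proof.
  intros Hx.
  assert (EQ : Qfun mu r sigma dt = bs_Q (Mpar mu r sigma dt))
    by (apply functional_extensionality; intros y; unfold Qfun, bs_Q; rewrite Phi_normal_cdf; auto).
  unfold qBS, deriv_val; rewrite EQ.
  apply (uniqueness_limite (bs_Q (Mpar mu r sigma dt)) x);
    [apply (choose_R_spec (derivable_pt_lim _ x)); eexists |]; apply derivable_pt_lim_bs_Q, Hx.
Qed.

Lemma bs_q_pos (M x : R) : 0 < bs_q M x.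
Proof. apply exp_pos. Qed.

Lemma bs_q_antitone (M x x' : R) :
  0 <= M -> 0 < x -> x <= x' -> x' < 1 -> bs_q M x' <= bs_q M x.
Proof.
  intros HM Hx Hxx' Hx'; apply exp_le_compat.
  pose proof (Phi_inv_le x x' ltac:(lra) ltac:(lra) Hxx'); nra.
Qed.

Lemma continuity_bs_q (M x : R) : 0 < x < 1 -> continuity_pt (bs_q M) x.
Proof.
  intros Hx; apply (continuity_pt_comp (fun x => - M * Phi_inv x - M * M / 2) exp);
    [| apply derivable_continuous_pt, derivable_exp].
  apply (continuity_pt_minus (fun x => - M * Phi_inv x) (fun _ => M * M / 2));
    [| apply continuity_pt_const; intros ? ?; reflexivity].
  apply (continuity_pt_scal Phi_inv (- M)), derivable_continuous_pt.
  eexists; apply derivable_pt_lim_Phi_inv, Hx.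
Qed.

Lemma is_prim01_bs_q (M : R) : is_prim01 (bs_q M) (bs_Q M).
Proof.
  intros a b Ha Hab Hb.
  apply (@is_RInt_derive R_CompleteNormedModule);
    intros x Hx; rewrite Rmin_left, Rmax_right in Hx by lra.
  - apply is_derive_Reals, derivable_pt_lim_bs_Q; lra.
  - apply continuity_pt_filterlim, continuity_bs_q; lra.
Qed.

(* [q^A_BS] is a probability density on (0, 1); only mass at most 1 is needed. *)
Lemma is_int01_bs_q (M : R) : exists l, is_int01 (bs_q M) l /\ 0 <= l <= 1.
Proof.
  destruct (is_int01_monotone_prim (bs_q M) (bs_Q M) 0 1) as [l [Hl Hle]].
  - apply is_prim01_bs_q.
  - intros x x' Hx Hxx' Hx'; apply normal_cdf_le.
    pose proof (Phi_inv_le x x' ltac:(lra) ltac:(lra) Hxx'); lra.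
  - intros x _; pose proof (normal_cdf_range (M + Phi_inv x)); unfold bs_Q; lra.
  - exists l; split; [| split]; auto; [| lra].
    apply (is_int01_ge0 (bs_q M)); auto; intros; apply Rlt_le, bs_q_pos.
Qed.

(** * Superdifferentials of a piecewise linear function *)

Section PiecewiseLinear.

Variables (N : nat) (xs : nat -> R) (v : R -> R).
Hypothesis HN : (1 <= N)%nat.
Hypothesis Hgrid : forall i, (S i < N)%nat -> xs i < xs (S i).
Hypothesis Hv_pl : forall i, (S i < N)%nat ->
  exists a b, forall y, xs i <= y <= xs (S i) -> v y = a * y + b.
Hypothesis Hv_const : forall y, xs (N - 1)%nat <= y -> v y = v (xs (N - 1)%nat).

Let D : R -> Prop := fun y => xs 0%nat <= y.

Lemma grid_lt (i j : nat) : (i < j)%nat -> (j < N)%nat -> xs i < xs j.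
Proof.
  induction j as [| j IH]; intros Hij HjN; [lia |].
  destruct (Nat.eq_dec i j) as [-> | ?]; [apply Hgrid; lia |].
  apply Rlt_trans with (xs j); [apply IH | apply Hgrid]; lia.
Qed.

Lemma grid_le (i j : nat) : (i <= j)%nat -> (j < N)%nat -> xs i <= xs j.
Proof.
  intros Hij HjN; destruct (Nat.eq_dec i j) as [-> | ?]; [lra |].
  left; apply grid_lt; lia.
Qed.

Lemma grid_cover (y : R) :
  xs 0%nat <= y -> xs (N - 1)%nat <= y \/ exists i, (S i < N)%nat /\ xs i <= y <= xs (S i).
Proof.
  intros Hy; destruct (Rle_or_lt (xs (N - 1)%nat) y) as [? | Hlast]; [left; auto | right].
  assert (Hcell : forall k, (k < N)%nat -> y <= xs k ->
            y = xs 0%nat \/ exists i, (S i <= k)%nat /\ xs i <= y <= xs (S i)).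
  { induction k as [| k IH]; intros Hk Hyk; [left; lra |].
    destruct (Rle_or_lt y (xs k)) as [Hyk' | Hyk'].
    - destruct (IH ltac:(lia) Hyk') as [? | [i [Hi Hcell]]];
        [left | right; exists i; split]; auto; lia.
    - right; exists k; split; [lia | lra]. }
  destruct (Hcell (N - 1)%nat ltac:(lia) ltac:(lra)) as [Hy0 | [i [Hi Hcell']]].
  - destruct (Nat.eq_dec N 1) as [-> | ?]; [simpl in Hlast; lra |].
    exists 0%nat; split; [lia |]; pose proof (Hgrid 0%nat ltac:(lia)); lra.
  - exists i; split; [lia | auto].
Qed.

(* Maximise [v - p id] over the grid: on each cell [v - p id] is affine, so it is
   maximised at an endpoint. *)
Lemma superdiff_grid_exists (p : R) :
  0 <= p -> exists k, (k < N)%nat /\ superdiff D v (xs k) p.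
Proof.
  intros Hp.
  destruct (exists_argmax_nat (fun k => v (xs k) - p * xs k) N HN) as [k [Hk Hmax]].
  exists k; split; auto; split; [apply grid_le; lia |].
  intros y Hy; destruct (grid_cover y Hy) as [Hlast | [i [Hi [Hy1 Hy2]]]].
  - rewrite (Hv_const y Hlast); pose proof (Hmax (N - 1)%nat ltac:(lia)); simpl in *; nra.
  - destruct (Hv_pl i Hi) as [a [b Hab]].
    pose proof (Hmax i ltac:(lia)) as Hi1; pose proof (Hmax (S i) ltac:(lia)) as Hi2.
    simpl in Hi1, Hi2.
    rewrite (Hab y) by lra; rewrite (Hab (xs i)) in Hi1 by lra.
    rewrite (Hab (xs (S i))) in Hi2 by lra.
    destruct (Rle_or_lt 0 (a - p)); nra.
Qed.

Lemma is_inf_dagger (p : R) :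
  0 <= p -> is_inf (fun x => superdiff D v x p) (dagger D v p).
Proof.
  intros Hp.
  destruct (is_inf_exists (fun x => superdiff D v x p) (xs 0%nat)) as [m Hm].
  - intros x [Hx _]; auto.
  - destruct (superdiff_grid_exists p Hp) as [k [_ Hk]]; eauto.
  - unfold dagger; rewrite (Rinf_eq _ m Hm); auto.
Qed.

(* If the infimum [m] were inside a cell [[lo, hi]] where [v] is affine, the slope there
   would be [p], and then every point of the cell below [m] would be in the set. *)
Lemma superdiff_inf_not_in_cell (p m lo hi a b : R) :
  is_inf (fun x => superdiff D v x p) m -> xs 0%nat <= lo -> lo < m < hi ->
  (forall w, lo <= w <= hi -> v w = a * w + b) -> False.
Proof.
  intros Hinf Hlo Hm Hlin.
  destruct (is_inf_approx _ _ ((hi - m) / 2) Hinf) as [z [[Dz Hsz] Hz]]; [lra |].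
  pose proof (proj1 Hinf z (conj Dz Hsz)) as Hmz.
  set (d := Rmin (hi - z) (z - lo) / 2).
  assert (Hd : 0 < d /\ d <= (hi - z) / 2 /\ d <= (z - lo) / 2).
  { unfold d; pose proof (Rmin_l (hi - z) (z - lo)); pose proof (Rmin_r (hi - z) (z - lo)).
    repeat split; [apply Rmin_case |..]; lra. }
  assert (Hp : p = a).
  { pose proof (Hsz (z + d) ltac:(unfold D in *; lra)).
    pose proof (Hsz (z - d) ltac:(unfold D in *; lra)).
    rewrite !Hlin in * by lra; nra. }
  set (w := (lo + m) / 2).
  assert (Hw : superdiff D v w p).
  { split; [unfold D, w; lra |]; intros y Hy; pose proof (Hsz y Hy).
    rewrite (Hlin z) in * by lra; rewrite (Hlin w) by (unfold w; lra); subst p; lra. }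
  pose proof (proj1 Hinf w Hw); unfold w in *; lra.
Qed.

Lemma dagger_on_grid (p : R) :
  0 <= p -> exists k, (k < N)%nat /\ dagger D v p = xs k.
Proof.
  intros Hp; pose proof (is_inf_dagger p Hp) as Hinf.
  set (m := dagger D v p) in *.
  assert (Hm0 : xs 0%nat <= m) by (apply (proj2 Hinf); intros x [Hx _]; auto).
  apply NNPP; intros Hoff.
  assert (Hne : forall k, (k < N)%nat -> xs k <> m) by (intros k Hk E; apply Hoff; eauto).
  destruct (grid_cover m Hm0) as [Hlast | [i [Hi [Hi1 Hi2]]]].
  - assert (xs (N - 1)%nat <> m) by (apply Hne; lia).
    apply (superdiff_inf_not_in_cell p m (xs (N - 1)%nat) (m + 1) 0 (v (xs (N - 1)%nat)) Hinf);
      [apply grid_le; lia | lra | intros w Hw; rewrite Hv_const by lra; ring].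
  - destruct (Hv_pl i Hi) as [a [b Hab]].
    assert (xs i <> m) by (apply Hne; lia); assert (xs (S i) <> m) by (apply Hne; lia).
    apply (superdiff_inf_not_in_cell p m (xs i) (xs (S i)) a b Hinf);
      [apply grid_le; lia | lra | auto].
Qed.

Lemma dagger_antitone (p1 p2 : R) :
  0 <= p1 -> p1 <= p2 -> dagger D v p2 <= dagger D v p1.
Proof.
  intros H1 [H12 | ->]; [| lra].
  pose proof (is_inf_dagger p2 ltac:(lra)) as [Hlb2 _].
  apply (proj2 (is_inf_dagger p1 H1)); intros z1 [D1 S1].
  destruct (superdiff_grid_exists p2 ltac:(lra)) as [k [_ Hk]].
  apply Rle_trans with (xs k); [apply Hlb2, Hk |].
  destruct Hk as [D2 S2]; pose proof (S1 _ D2); pose proof (S2 _ D1).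
  destruct (Rle_or_lt (xs k) z1); auto; nra.
Qed.

(* A nondecreasing function [f] with values on the grid is [xs 0] plus a sum of
   indicators of its level sets [{xs (S m) <= f}]; clamping [f] at [xs m] adds one
   indicator at a time. *)
Lemma ex_int01_mul_grid (f g w : R -> R) :
  (forall x, 0 < x < 1 -> exists k, (k < N)%nat /\ f x = xs k) ->
  (forall x x', 0 < x -> x <= x' -> x' < 1 -> f x <= f x') ->
  ex_int01 g -> ex_int01 (fun x => g x * w (f x)).
Proof.
  intros Hf Hmono Hg.
  assert (Hclamp : forall m, (m < N)%nat -> ex_int01 (fun x => g x * w (Rmin (f x) (xs m)))).
  { induction m as [| m IH]; intros Hm.
    - destruct Hg as [l Hl]; exists (0 + w (xs 0%nat) * l).
      apply (is_int01_ext (fun x => 0 + w (xs 0%nat) * g x));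
        [| apply is_int01_lin; [apply is_int01_const | auto]].
      intros x Hx; destruct (Hf x Hx) as [k [Hk ->]].
      rewrite Rmin_right by (apply grid_le; lia); ring.
    - destruct (IH ltac:(lia)) as [l1 Hl1].
      destruct (ex_int01_cut f g (xs (S m)) Hmono Hg) as [l2 Hl2].
      exists (l1 + (w (xs (S m)) - w (xs m)) * l2).
      eapply is_int01_ext; [| apply (is_int01_lin _ _ _ _ _ Hl1 Hl2)].
      intros x Hx; destruct (Hf x Hx) as [k [Hk Hfx]]; rewrite Hfx.
      destruct (Rle_dec (xs (S m)) (xs k)) as [Hle | Hlt].
      + assert (S m <= k)%nat
          by (apply Nat.nlt_ge; intros Hkm; pose proof (grid_lt k (S m) Hkm Hm); lra).
        pose proof (Hgrid m Hm).
        rewrite (Rmin_right (xs k) (xs (S m))), (Rmin_right (xs k) (xs m)) by lra; ring.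
      + assert (k <= m)%nat
          by (apply Nat.nlt_ge; intros Hkm; pose proof (grid_le (S m) k Hkm Hk); lra).
        pose proof (grid_le k m ltac:(lia) ltac:(lia)).
        rewrite (Rmin_left (xs k) (xs (S m))), (Rmin_left (xs k) (xs m)) by lra; ring. }
  destruct (Hclamp (N - 1)%nat ltac:(lia)) as [l Hl]; exists l.
  eapply is_int01_ext; [| exact Hl].
  intros x Hx; destruct (Hf x Hx) as [k [Hk ->]].
  rewrite Rmin_left by (apply grid_le; lia); reflexivity.
Qed.

Lemma dagger_ge (p : R) : 0 <= p -> xs 0%nat <= dagger D v p.
Proof. intros Hp; apply (proj2 (is_inf_dagger p Hp)); intros x [Hx _]; auto. Qed.

End PiecewiseLinear.

Section FEtaIntegrals.

Variables (mu r sigma dt s : R) (C N : nat) (xs : nat -> R) (v : R -> R) (eta : R).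
Hypothesis Hsigma : 0 < sigma.
Hypothesis Hs : 0 < s.
Hypothesis Heta : 0 < eta.
Hypothesis HN : (1 <= N)%nat.
Hypothesis Hgrid : forall i, (S i < N)%nat -> xs i < xs (S i).
Hypothesis Hv_pl : forall i, (S i < N)%nat ->
  exists a b, forall y, xs i <= y <= xs (S i) -> v y = a * y + b.
Hypothesis Hv_const : forall y, xs (N - 1)%nat <= y -> v y = v (xs (N - 1)%nat).

Let M : R := Mpar mu r sigma dt.
Let c : R := eta * powerRZ s (Z.of_nat C - 1) * exp (- r * dt).
Let f : R -> R := f_eta mu r sigma dt s C (xs 0%nat) v eta.

Lemma Mpar_nonneg : 0 <= M.
Proof.
  unfold M, Mpar; apply Rmult_le_pos; [apply Rmult_le_pos; [apply Rabs_pos | apply sqrt_pos] |].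
  left; apply Rinv_0_lt_compat, Hsigma.
Qed.

Lemma f_eta_scale_pos : 0 < c.
Proof.
  unfold c; repeat apply Rmult_lt_0_compat; auto; [apply powerRZ_lt | apply exp_pos]; auto.
Qed.

Lemma f_eta_dagger (x : R) :
  0 < x < 1 -> f x = dagger (fun y => xs 0%nat <= y) v (c * bs_q M x).
Proof. intros Hx; unfold f, f_eta; rewrite qBS_bs_q by auto; reflexivity. Qed.

Lemma f_eta_ge (x : R) : 0 < x < 1 -> xs 0%nat <= f x.
Proof.
  intros Hx; rewrite f_eta_dagger by auto; apply (dagger_ge N xs v); auto.
  pose proof f_eta_scale_pos; pose proof (bs_q_pos M x); nra.
Qed.

Lemma ex_int01_mul_f_eta (g w : R -> R) : ex_int01 g -> ex_int01 (fun x => g x * w (f x)).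
Proof.
  pose proof f_eta_scale_pos; pose proof Mpar_nonneg.
  apply (ex_int01_mul_grid N xs); auto.
  - intros x Hx; rewrite f_eta_dagger by auto; apply (dagger_on_grid N xs v); auto.
    pose proof (bs_q_pos M x); nra.
  - intros x x' Hx Hxx' Hx'; rewrite !f_eta_dagger by lra.
    apply (dagger_antitone N xs v); auto; [pose proof (bs_q_pos M x'); nra |].
    apply Rmult_le_compat_l; [lra | apply bs_q_antitone; auto].
Qed.

Lemma Int_one_plus_v_f_eta_le_1 :
  (forall y, xs 0%nat <= y -> v y <= 0) -> Int (fun x => 1 + v (f x)) 0 1 <= 1.
Proof.
  intros Hv_nonpos.
  assert (Hone : ex_int01 (fun _ => 1)) by (exists 1; apply is_int01_const).
  replace 1 with (Int (fun _ => 1) 0 1) at 2 by (apply Int_is_int01, is_int01_const).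
  apply Int_le; auto.
  - apply (ex_int01_ext (fun x => 1 + 1 * (1 * v (f x)))); [intros; ring |].
    apply ex_int01_lin, ex_int01_mul_f_eta; auto.
  - intros x Hx; pose proof (Hv_nonpos (f x) (f_eta_ge x Hx)); lra.
Qed.

Lemma Int_q_f_eta_ge :
  exp (- r * dt) * Rmin (xs 0%nat) 0
    <= Int (fun x => exp (- r * dt) * qBS mu r sigma dt x * f x) 0 1.
Proof.
  set (e := exp (- r * dt)); set (m := Rmin (xs 0%nat) 0).
  assert (He : 0 < e) by apply exp_pos.
  assert (Hm : m <= xs 0%nat /\ m <= 0) by (split; [apply Rmin_l | apply Rmin_r]).
  destruct (is_int01_bs_q M) as [l [Hl Hl01]].
  assert (Hlow : is_int01 (fun x => 0 + e * m * bs_q M x) (0 + e * m * l))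
    by (apply is_int01_lin; [apply is_int01_const | auto]).
  apply Rle_trans with (Int (fun x => 0 + e * m * bs_q M x) 0 1).
  - rewrite (Int_is_int01 _ _ Hlow); assert (e * m <= 0) by nra; nra.
  - apply Int_le; [exists (0 + e * m * l); exact Hlow | |].
    + apply (ex_int01_ext (fun x => (0 + e * bs_q M x) * (fun y => y) (f x))).
      { intros x Hx; rewrite qBS_bs_q, Rplus_0_l by auto; reflexivity. }
      apply (ex_int01_mul_f_eta (fun x => 0 + e * bs_q M x) (fun y => y)).
      exists (0 + e * l); apply is_int01_lin; [apply is_int01_const | exact Hl].
    + intros x Hx; rewrite qBS_bs_q, Rplus_0_l by auto; fold M.
      pose proof (f_eta_ge x Hx); pose proof (bs_q_pos M x).
      replace (e * m * bs_q M x) with (e * bs_q M x * m) by ring.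
      apply Rmult_le_compat_l; [apply Rlt_le, Rmult_lt_0_compat |]; lra.
Qed.

End FEtaIntegrals.

Lemma gamma_eta_argument_bounds (eta dt s I d : R) :
  0 < dt -> 0 < s < 1 -> I <= 1 -> 0 < eta < d * dt * (1 - s) ->
  0 < - (eta / dt) * / (-1 + s * I) < d.
Proof.
  intros Hdt Hs HI Heta.
  assert (Hden : 1 - s <= 1 - s * I) by nra.
  replace (- (eta / dt) * / (-1 + s * I)) with (eta / (dt * (1 - s * I))) by (field; nra).
  split; [apply Rdiv_lt_0_compat; nra |].
  apply Rmult_lt_reg_r with (dt * (1 - s * I)); [nra |].
  unfold Rdiv; rewrite Rmult_assoc, Rinv_l by nra; nra.
Qed.

Theorem mainTheorem9
  (mu r sigma dt s : R) (C N : nat) (xs : nat -> R) (v u : R -> R)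
  (Hsigma : 0 < sigma) (Hdt : 0 < dt) (Hs : 0 < s < 1)
  (HC : C = 0%nat \/ C = 1%nat)
  (HN : (1 <= N)%nat)
  (Hgrid : forall i, (S i < N)%nat -> xs i < xs (S i))
  (Hv_pl : forall i, (S i < N)%nat ->
     exists a b, forall y, xs i <= y <= xs (S i) -> v y = a * y + b)
  (Hv_concave : forall x y t, xs 0%nat <= x -> xs 0%nat <= y -> 0 <= t <= 1 ->
     t * v x + (1 - t) * v y <= v (t * x + (1 - t) * y))
  (Hv_nonpos : forall y, xs 0%nat <= y -> v y <= 0)
  (Hv_incr : forall y z, xs 0%nat <= y -> y <= z -> v y <= v z)
  (Hv_const : forall y, xs (N - 1)%nat <= y -> v y = v (xs (N - 1)%nat))
  (Hu_concave : forall x y t, 0 <= t <= 1 ->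
     t * u x + (1 - t) * u y <= u (t * x + (1 - t) * y))
  (Hu_incr : forall x y, x <= y -> u x <= u y)
  (Hud_cont : forall p, 0 < p -> continuity_pt (dagger fullR u) p)
  (Hud_lim : forall K, exists d, 0 < d /\
     forall p, 0 < p < d -> K < dagger fullR u p) :
  forall K, exists d, 0 < d /\
    forall eta, 0 < eta < d -> K < X_eta mu r sigma dt s C (xs 0%nat) v u eta.
Proof.
  intros K.
  set (em := exp (- r * dt) * Rmin (xs 0%nat) 0).
  assert (Hem : em <= 0)
    by (pose proof (exp_pos (- r * dt)); pose proof (Rmin_r (xs 0%nat) 0); unfold em; nra).
  destruct (Hud_lim (K - em)) as [d [Hd Hgamma]].
  exists (d * dt * (1 - s)); split; [apply Rmult_lt_0_compat; nra |].
  intros eta Heta.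
  pose proof (Int_one_plus_v_f_eta_le_1 mu r sigma dt s C N xs v eta
                Hsigma (proj1 Hs) (proj1 Heta) HN Hgrid Hv_pl Hv_const Hv_nonpos) as HI1.
  pose proof (Int_q_f_eta_ge mu r sigma dt s C N xs v eta
                Hsigma (proj1 Hs) (proj1 Heta) HN Hgrid Hv_pl Hv_const) as HI2.
  specialize (Hgamma _ (gamma_eta_argument_bounds eta dt s _ d Hdt Hs HI1 Heta)).
  assert (HsC : 0 < s ^ C <= 1) by (destruct HC as [-> | ->]; simpl; lra).
  unfold X_eta, gamma_eta; fold em in HI2.
  nra.
Qed.
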